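(* Let $\mathfrak p=(p,q)$ with $p$ odd and $q$ divisible by four, and $\Gamma=\Gamma_{\mathfrak p}$. Then $0\in\operatorname{int}B_j^\Gamma$ for some $1\le j\le pq$.
   Context: For $r\ge3$ and $\theta\in\mathbb R$, $\Delta_\theta^r\in\mathbb C^{r\times r}$ is the Hermitian matrix with $1$ on the sub- and superdiagonals, $0$ on the diagonal, entry $e^{-i\theta}$ in position $(1,r)$ and $e^{i\theta}$ in position $(r,1)$, all other entries $0$; $\Delta_\theta^1=2\cos\theta$, $\Delta_\theta^2=\begin{bmatrix}0&1+e^{-i\theta}\\1+e^{i\theta}&0\end{bmatrix}$. $\Gamma_{\mathfrak p}=([0,p)\times[0,q))\cap\mathbb Z^2$, $\Delta^{\Gamma}_{\theta,\varphi}=\Delta_\theta^p\otimes I_q+I_p\otimes\Delta_\varphi^q$, with eigenvalues $\lambda_1^\Gamma(\theta,\varphi)\le\cdots\le\lambda_{pq}^\Gamma(\theta,\varphi)$ counted with multiplicity, and bands $B_j^\Gamma=\{\lambda_j^\Gamma(\theta,\varphi):(\theta,\varphi)\in[0,\pi]^2\}$. *)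

From Stdlib Require Import Reals Lra Lia Arith.
Open Scope R_scope.

Definition C := (R * R)%type.
Definition C0 : C := (0, 0).
Definition C1 : C := (1, 0).
Definition RtoC (x : R) : C := (x, 0).
Definition Cadd (z w : C) : C := (fst z + fst w, snd z + snd w).
Definition Cmul (z w : C) : C :=
  (fst z * fst w - snd z * snd w, fst z * snd w + snd z * fst w).
Definition Cconj (z : C) : C := (fst z, - snd z).
Definition Cexpi (t : R) : C := (cos t, sin t).

Fixpoint csum (n : nat) (f : nat -> C) : C :=
  match n with
  | O => C0
  | S m => Cadd (csum m f) (f m)
  end.

(** Square matrices of size n are functions on indices 0..n-1
    (paper's row/column i corresponds to index i-1 here). *)
Definition mat := nat -> nat -> C.

Definition Delta (r : nat) (theta : R) : mat :=
  fun i j =>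
  match r with
  | O => C0
  | 1%nat => if andb (Nat.eqb i 0) (Nat.eqb j 0) then RtoC (2 * cos theta) else C0
  | 2%nat =>
      if andb (Nat.eqb i 0) (Nat.eqb j 1) then Cadd C1 (Cexpi (- theta))
      else if andb (Nat.eqb i 1) (Nat.eqb j 0) then Cadd C1 (Cexpi theta)
      else C0
  | _ =>
      if orb (Nat.eqb (S i) j) (Nat.eqb (S j) i) then C1
      else if andb (Nat.eqb i 0) (Nat.eqb j (r - 1)) then Cexpi (- theta)
      else if andb (Nat.eqb i (r - 1)) (Nat.eqb j 0) then Cexpi theta
      else C0
  end.

Definition Imat : mat := fun i j => if Nat.eqb i j then C1 else C0.

(** Kronecker product A (x) B where B is m x m: row index (a,b) |-> a*m+b *)
Definition kron (m : nat) (A B : mat) : mat :=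
  fun i j => Cmul (A (i / m)%nat (j / m)%nat) (B (i mod m)%nat (j mod m)%nat).

Definition madd (A B : mat) : mat := fun i j => Cadd (A i j) (B i j).

Definition DeltaGamma (p q : nat) (theta phi : R) : mat :=
  madd (kron q (Delta p theta) Imat) (kron q Imat (Delta q phi)).

(** [l 0 <= l 1 <= ... <= l (n-1)] are the eigenvalues of the (Hermitian)
    n x n matrix M counted with multiplicity: there is a unitary U whose
    j-th column is an eigenvector of M for the eigenvalue l j
    (i.e. M U = U diag(l), U^* U = I). *)
Definition is_sorted_eigs (n : nat) (M : mat) (l : nat -> R) : Prop :=
  (forall j, (S j < n)%nat -> l j <= l (S j)) /\
  exists U : mat,
    (forall i j, (i < n)%nat -> (j < n)%nat ->
       csum n (fun k => Cmul (Cconj (U k i)) (U k j)) = Imat i j) /\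
    (forall i j, (i < n)%nat -> (j < n)%nat ->
       csum n (fun k => Cmul (M i k) (U k j)) = Cmul (U i j) (RtoC (l j))).

Definition lambdaGamma (p q : nat) (j : nat) (theta phi x : R) : Prop :=
  exists l, is_sorted_eigs (p * q) (DeltaGamma p q theta phi) l /\ l (j - 1)%nat = x.

Definition band (p q j : nat) (x : R) : Prop :=
  exists theta phi, 0 <= theta <= PI /\ 0 <= phi <= PI /\ lambdaGamma p q j theta phi x.

Definition in_interior (S : R -> Prop) (x : R) : Prop :=
  exists eps, 0 < eps /\ forall y, Rabs (y - x) < eps -> S y.

(* At [phi = 0] the matrix [DeltaGamma p q th 0] is diagonalised by tensor products of
   twisted discrete Fourier vectors, with eigenvalues
   [2 cos ((th + 2 PI k) / p) + 2 cos (2 PI l / q)].  Let [q = 4 m] and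
   [th = PI (2m + 1) / (4m)], so that [PI - th = PI (2m - 1) / (4m)].  At both angles no
   eigenvalue vanishes, and the number of negative eigenvalues is odd: for each [k] the
   terms [l] and [q - l] pair up, [l = 0] gives a positive and [l = q/2] a negative
   eigenvalue, and [p] is odd.  Moreover [th |-> PI - th] negates the spectrum, so the two
   counts add up to [pq], which is divisible by 4; hence they differ.  If, say, [N] negative
   eigenvalues occur at one angle and fewer at the other, the [N]-th smallest eigenvalue
   changes sign between the two angles; it depends continuously on [th], so by the
   intermediate value theorem its band contains a neighbourhood of 0. *)

From Stdlib Require Import Reals Lra Lia Arith List Permutation Sorting ZArith.
Open Scope R_scope.

(** * Complex numbers and finite sums *)

Lemma C_eq (z w : C) : fst z = fst w -> snd z = snd w -> z = w.
Proof. destruct z, w; simpl; intros -> ->; reflexivity. Qed.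

Definition Copp (z : C) : C := (- fst z, - snd z).

Lemma C_ring_theory :
  ring_theory C0 C1 Cadd Cmul (fun z w => Cadd z (Copp w)) Copp (@eq C).
Proof. split; intros; apply C_eq; unfold Cadd, Cmul, Copp, C0, C1; simpl; ring. Qed.

Add Ring C_ring : C_ring_theory.

Lemma Cmul_RtoC a b : Cmul (RtoC a) (RtoC b) = RtoC (a * b).
Proof. apply C_eq; simpl; ring. Qed.

Lemma Cmul_integral z w : Cmul z w = C0 -> z = C0 \/ w = C0.
Proof.
  destruct z as [x y], w as [a b]; unfold Cmul, C0; simpl; intros H.
  injection H as H1 H2.
  destruct (Req_dec (x * x + y * y) 0) as [Hz | Hz].
  - left; pose proof (Rle_0_sqr x); pose proof (Rle_0_sqr y); unfold Rsqr in *.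
    assert (Hx : x * x = 0) by lra; assert (Hy : y * y = 0) by lra.
    apply Rmult_integral in Hx, Hy; f_equal; tauto.
  - right.
    assert (Ea : a * (x * x + y * y) = x * (x * a - y * b) + y * (x * b + y * a)) by ring.
    assert (Eb : b * (x * x + y * y) = x * (x * b + y * a) - y * (x * a - y * b)) by ring.
    rewrite H1, H2 in Ea, Eb.
    f_equal; apply (Rmult_eq_reg_r (x * x + y * y)); auto; lra.
Qed.

Lemma Cexpi_add x y : Cmul (Cexpi x) (Cexpi y) = Cexpi (x + y).
Proof. apply C_eq; simpl; rewrite ?cos_plus, ?sin_plus; ring. Qed.

Lemma Cexpi_0 : Cexpi 0 = C1.
Proof. unfold Cexpi, C1; rewrite cos_0, sin_0; reflexivity. Qed.

Lemma Cexpi_opp_eq x y : Cexpi x = Cexpi y -> Cexpi (- x) = Cexpi (- y).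
Proof.
  unfold Cexpi; intros H; injection H as Hc Hs.
  rewrite !cos_neg, !sin_neg, Hc, Hs; reflexivity.
Qed.

Lemma Cexpi_period x k : Cexpi (x + 2 * INR k * PI) = Cexpi x.
Proof. unfold Cexpi; rewrite cos_period, sin_period; reflexivity. Qed.

Lemma Cexpi_2PI_nat k : Cexpi (2 * PI * INR k) = C1.
Proof. rewrite <- Cexpi_0, <- (Cexpi_period 0 k); f_equal; ring. Qed.

Lemma Cexpi_neighbours x y z a : x = z - a -> y = z + a ->
  Cadd (Cexpi x) (Cexpi y) = Cmul (Cexpi z) (RtoC (2 * cos a)).
Proof.
  intros -> ->; apply C_eq; simpl; unfold Rminus;
    rewrite ?cos_plus, ?sin_plus, ?cos_neg, ?sin_neg; ring.
Qed.

Lemma Cconj_mul z w : Cconj (Cmul z w) = Cmul (Cconj z) (Cconj w).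
Proof. apply C_eq; simpl; ring. Qed.

Lemma Cconj_scale_Cexpi c x : Cconj (Cmul (RtoC c) (Cexpi x)) = Cmul (RtoC c) (Cexpi (- x)).
Proof. apply C_eq; simpl; rewrite ?cos_neg, ?sin_neg; ring. Qed.

(* [cos x = 1 - 2 sin (x/2)^2], so [Cexpi x = 1] forces [sin (x/2) = 0]. *)
Lemma Cexpi_eq_1 x : Cexpi x = C1 -> exists j : Z, x = 2 * IZR j * PI.
Proof.
  unfold Cexpi, C1; intros H; injection H as Hc _.
  rewrite <- (Rmult_1_l x), <- (Rinv_r 2), Rmult_assoc, cos_2a_sin in Hc by lra.
  destruct (sin_eq_0_0 (/ 2 * x)) as [j Hj]; [nra|].
  exists j; lra.
Qed.

Lemma csum_ext n f g : (forall k, (k < n)%nat -> f k = g k) -> csum n f = csum n g.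
Proof. induction n; simpl; intros H; auto. rewrite IHn, H by (auto; lia). reflexivity. Qed.

Lemma csum_add n f g : csum n (fun k => Cadd (f k) (g k)) = Cadd (csum n f) (csum n g).
Proof. induction n; simpl; [|rewrite IHn]; ring. Qed.

Lemma csum_mul_l n c f : Cmul c (csum n f) = csum n (fun k => Cmul c (f k)).
Proof. induction n; simpl; [|rewrite <- IHn]; ring. Qed.

Lemma csum_C0 n : csum n (fun _ => C0) = C0.
Proof. induction n; simpl; [|rewrite IHn]; ring. Qed.

Lemma csum_const_C1 n : csum n (fun _ => C1) = RtoC (INR n).
Proof.
  induction n; simpl csum; [reflexivity|].
  rewrite IHn, S_INR; apply C_eq; simpl; ring.
Qed.

Lemma csum_app n m f : csum (n + m) f = Cadd (csum n f) (csum m (fun i => f (n + i)%nat)).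
Proof.
  induction m; simpl; [rewrite Nat.add_0_r; ring|].
  rewrite Nat.add_succ_r; simpl; rewrite IHm; ring.
Qed.

Lemma csum_prod p q f : csum (p * q) f = csum p (fun a => csum q (fun b => f (a * q + b)%nat)).
Proof. induction p; simpl; auto. rewrite Nat.add_comm, csum_app, IHp. reflexivity. Qed.

Lemma csum_mul_csum p q f g :
  csum p (fun a => csum q (fun b => Cmul (f a) (g b))) = Cmul (csum p f) (csum q g).
Proof.
  induction p; simpl; [ring|].
  rewrite IHp, <- csum_mul_l; ring.
Qed.

Lemma csum_single n t f : (t < n)%nat ->
  (forall k, (k < n)%nat -> k <> t -> f k = C0) -> csum n f = f t.
Proof.
  induction n; intros Ht H; [lia|]; simpl.
  destruct (Nat.eq_dec t n) as [->|Htn].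
  - rewrite (csum_ext n f (fun _ => C0)), csum_C0 by (intros; apply H; lia). ring.
  - rewrite IHn, (H n) by (auto; lia). ring.
Qed.

Lemma csum_pair n t u f : (t < n)%nat -> (u < n)%nat -> t <> u ->
  (forall k, (k < n)%nat -> k <> t -> k <> u -> f k = C0) -> csum n f = Cadd (f t) (f u).
Proof.
  induction n; intros Ht Hu Htu H; [lia|]; simpl.
  destruct (Nat.eq_dec t n) as [->|Htn]; [|destruct (Nat.eq_dec u n) as [->|Hun]].
  - rewrite (csum_single n u) by (intros; try apply H; lia). ring.
  - rewrite (csum_single n t) by (intros; try apply H; lia). reflexivity.
  - rewrite IHn, (H n) by (auto; lia). ring.
Qed.

Lemma csum_Cexpi_geometric n g : Cexpi (INR n * g) = C1 -> Cexpi g <> C1 ->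
  csum n (fun a => Cexpi (INR a * g)) = C0.
Proof.
  intros Hn Hg.
  assert (Htele : Cmul (Cadd (Cexpi g) (Copp C1)) (csum n (fun a => Cexpi (INR a * g)))
                  = Cadd (Cexpi (INR n * g)) (Copp C1)).
  { clear Hn; induction n; simpl csum.
    - rewrite Rmult_0_l, Cexpi_0; ring.
    - rewrite S_INR, Rmult_plus_distr_r, Rmult_1_l, <- Cexpi_add.
      transitivity (Cadd (Cmul (Cadd (Cexpi g) (Copp C1)) (csum n (fun a => Cexpi (INR a * g))))
                         (Cmul (Cadd (Cexpi g) (Copp C1)) (Cexpi (INR n * g)))); [ring|].
      rewrite IHn; ring. }
  rewrite Hn in Htele; replace (Cadd C1 (Copp C1)) with C0 in Htele by ring.
  destruct (Cmul_integral _ _ Htele) as [Hz|Hz]; [|exact Hz].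
  exfalso; apply Hg.
  transitivity (Cadd (Cadd (Cexpi g) (Copp C1)) C1); [ring|]. rewrite Hz; ring.
Qed.

(** * Eigenvectors of the twisted cycle *)

Definition orthonormal_columns (n : nat) (U : mat) : Prop :=
  forall i j, (i < n)%nat -> (j < n)%nat ->
    csum n (fun k => Cmul (Cconj (U k i)) (U k j)) = Imat i j.

Definition eigenbasis (n : nat) (M U : mat) (l : nat -> R) : Prop :=
  forall i j, (i < n)%nat -> (j < n)%nat ->
    csum n (fun k => Cmul (M i k) (U k j)) = Cmul (U i j) (RtoC (l j)).

Definition cycle_angle (r : nat) (th : R) (k : nat) : R := (th + 2 * PI * INR k) / INR r.

Definition cycle_eigval (r : nat) (th : R) (k : nat) : R := 2 * cos (cycle_angle r th k).

Definition cycle_basis (r : nat) (th : R) : mat :=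
  fun a k => Cmul (RtoC (/ sqrt (INR r))) (Cexpi (INR a * cycle_angle r th k)).

Lemma cycle_basis_orthonormal r th : (0 < r)%nat -> orthonormal_columns r (cycle_basis r th).
Proof.
  intros Hr k l Hk Hl.
  assert (Hr0 : 0 < INR r) by (apply lt_0_INR; lia).
  set (g := 2 * PI * (INR l - INR k) / INR r).
  rewrite (csum_ext _ _ (fun a => Cmul (RtoC (/ INR r)) (Cexpi (INR a * g)))).
  2: { intros a _; unfold cycle_basis; rewrite Cconj_scale_Cexpi.
       transitivity (Cmul (Cmul (RtoC (/ sqrt (INR r))) (RtoC (/ sqrt (INR r))))
                      (Cmul (Cexpi (- (INR a * cycle_angle r th k)))
                            (Cexpi (INR a * cycle_angle r th l)))); [ring|].
       rewrite Cmul_RtoC, Cexpi_add, <- Rinv_mult, sqrt_sqrt by lra.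
       unfold g, cycle_angle; f_equal; f_equal; field; lra. }
  rewrite <- csum_mul_l; unfold Imat; destruct (Nat.eqb_spec k l) as [<-|Hkl].
  - rewrite (csum_ext _ _ (fun _ => C1)), csum_const_C1, Cmul_RtoC, Rinv_l; [reflexivity|lra|].
    intros a _; unfold g; rewrite Rminus_diag, Rmult_0_r, Rdiv_0_l, Rmult_0_r; apply Cexpi_0.
  - rewrite csum_Cexpi_geometric; [ring| |].
    + replace (INR r * g) with (2 * PI * INR l + - (2 * PI * INR k)) by (unfold g; field; lra).
      rewrite <- Cexpi_add, Cexpi_2PI_nat, (Cexpi_opp_eq _ 0), Ropp_0, Cexpi_0 by
        (rewrite Cexpi_2PI_nat, Cexpi_0; reflexivity).
      ring.
    + intros Hg; destruct (Cexpi_eq_1 g Hg) as [j Hj].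
      assert (HZ : IZR (Z.of_nat l - Z.of_nat k) = IZR (j * Z.of_nat r)).
      { rewrite minus_IZR, mult_IZR, <- !INR_IZR_INZ.
        apply (Rmult_eq_reg_l (2 * PI / INR r));
          [|pose proof PI_RGT_0; apply Rgt_not_eq, Rdiv_lt_0_compat; lra].
        replace (2 * PI / INR r * (INR l - INR k)) with g by (unfold g; field; lra).
        rewrite Hj; field; lra. }
      apply eq_IZR in HZ; destruct (Z.lt_trichotomy j 0) as [?|[->|?]]; nia.
Qed.

Ltac Delta_cases :=
  cbn [Delta Nat.sub];
  repeat match goal with |- context [Nat.eqb ?x ?y] => destruct (Nat.eqb_spec x y) end;
  cbn [orb andb]; try lia.

(* The hypothesis says [e^{i r al} = e^{i th}]: the twist [e^{± i th}] closing the cycle is then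
   exactly the phase picked up by [a |-> e^{i a al}] going once around. *)
Lemma Delta_row_Cexpi r th al s : (0 < r)%nat -> (s < r)%nat -> Cexpi (INR r * al) = Cexpi th ->
  csum r (fun a => Cmul (Delta r th s a) (Cexpi (INR a * al))) =
  Cmul (Cexpi (INR s * al)) (RtoC (2 * cos al)).
Proof.
  intros Hr Hs Hal.
  pose proof (Cexpi_opp_eq _ _ (eq_sym Hal)) as Hal'.
  destruct r as [|[|[|r']]]; [lia| | |].
  - assert (s = 0%nat) as -> by lia.
    rewrite Rmult_1_l in Hal; injection Hal as Hcos _.
    cbn [csum Delta Nat.eqb andb INR]; rewrite Rmult_0_l, Cexpi_0, Hcos; ring.
  - cbn [csum INR] in *.
    destruct s as [|[|]]; [| |lia]; Delta_cases.
    + rewrite Hal'.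
      transitivity (Cadd (Cmul (Cexpi (- ((1 + 1) * al))) (Cexpi (1 * al))) (Cexpi (1 * al))).
      { rewrite Rmult_1_l; ring. }
      rewrite Cexpi_add; apply Cexpi_neighbours; simpl; ring.
    + rewrite <- Hal, Rmult_0_l, Cexpi_0.
      transitivity (Cadd (Cexpi 0) (Cexpi ((1 + 1) * al))); [rewrite Cexpi_0; ring|].
      apply Cexpi_neighbours; simpl; ring.
  - set (n := S (S (S r'))) in *.
    assert (Hn : INR n = INR r' + 3) by (unfold n; rewrite !S_INR; ring).
    destruct (Nat.eq_dec s 0) as [->|Hs0]; [|destruct (Nat.eq_dec s (S (S r'))) as [->|Hs1]].
    + rewrite (csum_pair _ (S (S r')) 1) by (unfold n; intros; try Delta_cases; ring || lia).
      unfold n; Delta_cases; rewrite Hal', Cexpi_add.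
      transitivity (Cadd (Cexpi (- (INR n * al) + INR (S (S r')) * al)) (Cexpi (INR 1 * al)));
        [ring|].
      apply Cexpi_neighbours; rewrite ?Hn, ?S_INR; simpl; ring.
    + rewrite (csum_pair _ (S r') 0) by (unfold n; intros; try Delta_cases; ring || lia).
      unfold n; Delta_cases; rewrite <- Hal, Cexpi_add.
      transitivity (Cadd (Cexpi (INR (S r') * al)) (Cexpi (INR n * al + INR 0 * al))); [ring|].
      apply Cexpi_neighbours; rewrite ?Hn, ?S_INR; simpl; ring.
    + rewrite (csum_pair _ (s - 1) (S s)) by (unfold n; intros; try Delta_cases; ring || lia).
      unfold n; Delta_cases;
        transitivity (Cadd (Cexpi (INR (s - 1) * al)) (Cexpi (INR (S s) * al))); try ring;
        apply Cexpi_neighbours; rewrite ?minus_INR, S_INR by lia; simpl; ring.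
Qed.

Lemma cycle_basis_eigen r th : (0 < r)%nat ->
  eigenbasis r (Delta r th) (cycle_basis r th) (cycle_eigval r th).
Proof.
  intros Hr s k Hs _; unfold cycle_basis, cycle_eigval.
  transitivity (Cmul (RtoC (/ sqrt (INR r)))
    (csum r (fun a => Cmul (Delta r th s a) (Cexpi (INR a * cycle_angle r th k))))).
  { rewrite csum_mul_l; apply csum_ext; intros; ring. }
  rewrite Delta_row_Cexpi; [ring|lia|lia|].
  replace (INR r * cycle_angle r th k) with (th + 2 * INR k * PI)
    by (unfold cycle_angle; field; apply not_0_INR; lia).
  apply Cexpi_period.
Qed.

(** * Kronecker sums *)

Lemma div_mul_add a b q : (b < q)%nat -> ((a * q + b) / q = a)%nat.
Proof. intros; rewrite Nat.div_add_l, Nat.div_small; lia. Qed.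

Lemma mod_mul_add a b q : (b < q)%nat -> ((a * q + b) mod q = b)%nat.
Proof. intros; rewrite Nat.add_comm, Nat.Div0.mod_add; apply Nat.mod_small; auto. Qed.

Lemma kron_Imat q i j : (0 < q)%nat -> kron q Imat Imat i j = Imat i j.
Proof.
  intros Hq; unfold kron, Imat.
  destruct (Nat.eqb_spec i j) as [<-|Hij]; [rewrite !Nat.eqb_refl; ring|].
  destruct (Nat.eqb_spec (i / q) (j / q)) as [Hd|]; [|ring].
  destruct (Nat.eqb_spec (i mod q) (j mod q)) as [Hm|]; [|ring].
  exfalso; apply Hij; rewrite (Nat.div_mod_eq i q), (Nat.div_mod_eq j q), Hd, Hm; reflexivity.
Qed.

Lemma csum_Imat_l n i f : (i < n)%nat -> csum n (fun b => Cmul (Imat i b) (f b)) = f i.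
Proof.
  intros Hi; rewrite (csum_single n i); auto.
  - unfold Imat; rewrite Nat.eqb_refl; ring.
  - intros k _ Hk; unfold Imat; destruct (Nat.eqb_spec i k); [lia|ring].
Qed.

Section KroneckerSum.
Variables (p q : nat) (U V : mat).
Hypothesis q_pos : (0 < q)%nat.

Let index_bounds j : (j < p * q)%nat -> (j / q < p)%nat /\ (j mod q < q)%nat.
Proof. split; [apply Nat.Div0.div_lt_upper_bound | apply Nat.mod_upper_bound]; lia. Qed.

Lemma orthonormal_columns_kron :
  orthonormal_columns p U -> orthonormal_columns q V -> orthonormal_columns (p * q) (kron q U V).
Proof.
  intros HU HV i j Hi Hj.
  destruct (index_bounds i Hi), (index_bounds j Hj).
  rewrite <- (kron_Imat q i j q_pos); unfold kron at 3.
  rewrite <- (HU (i / q)%nat (j / q)%nat), <- (HV (i mod q)%nat (j mod q)%nat),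
    <- csum_mul_csum, csum_prod by auto.
  apply csum_ext; intros a Ha; apply csum_ext; intros b Hb.
  unfold kron; rewrite div_mul_add, mod_mul_add, Cconj_mul by auto; ring.
Qed.

Lemma eigenbasis_kron_sum (A B : mat) (a b : nat -> R) :
  eigenbasis p A U a -> eigenbasis q B V b ->
  eigenbasis (p * q) (madd (kron q A Imat) (kron q Imat B)) (kron q U V)
    (fun j => a (j / q)%nat + b (j mod q)%nat).
Proof.
  intros HA HB i j Hi Hj.
  destruct (index_bounds i Hi), (index_bounds j Hj).
  rewrite csum_prod.
  rewrite (csum_ext _ _ (fun c => Cadd
     (csum q (fun d => Cmul (Cmul (A (i / q) c) (U c (j / q)))
                            (Cmul (Imat (i mod q) d) (V d (j mod q)))))
     (csum q (fun d => Cmul (Cmul (Imat (i / q) c) (U c (j / q)))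
                            (Cmul (B (i mod q) d) (V d (j mod q))))))%nat).
  2: { intros c Hc; rewrite <- csum_add; apply csum_ext; intros d Hd.
       unfold madd, kron; rewrite div_mul_add, mod_mul_add by auto; ring. }
  rewrite csum_add, !csum_mul_csum, HA, HB, !csum_Imat_l by auto.
  unfold kron; apply C_eq; simpl; ring.
Qed.

End KroneckerSum.

(** * Order statistics *)

Fixpoint insert_by (f : nat -> R) (x : nat) (l : list nat) : list nat :=
  match l with
  | nil => x :: nil
  | y :: t => if Rle_dec (f x) (f y) then x :: y :: t else y :: insert_by f x t
  end.

Fixpoint sort_by (f : nat -> R) (l : list nat) : list nat :=
  match l with nil => nil | x :: t => insert_by f x (sort_by f t) end.

Lemma insert_by_perm f x l : Permutation (insert_by f x l) (x :: l).
Proof.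
  induction l as [|y l IH]; simpl; auto.
  destruct (Rle_dec (f x) (f y)); auto.
  eapply perm_trans; [apply perm_skip, IH | apply perm_swap].
Qed.

Lemma sort_by_perm f l : Permutation (sort_by f l) l.
Proof. induction l; simpl; auto. eapply perm_trans; [apply insert_by_perm | auto]. Qed.

Lemma insert_by_sorted f x l :
  Sorted (fun a b => f a <= f b) l -> Sorted (fun a b => f a <= f b) (insert_by f x l).
Proof.
  induction l as [|y l IH]; simpl; intros H; [repeat constructor|].
  destruct (Rle_dec (f x) (f y)); [constructor; auto|].
  inversion H as [|? ? Hl Hhd]; subst; constructor; auto.
  destruct l as [|z l]; simpl; [constructor; lra|].
  inversion Hhd; subst; destruct (Rle_dec (f x) (f z)); constructor; lra.
Qed.

Lemma sort_by_sorted f l : Sorted (fun a b => f a <= f b) (sort_by f l).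
Proof. induction l; simpl; auto using insert_by_sorted. Qed.

Section OrderStatistics.
Variables (n : nat) (f : nat -> R).

Definition sorted_indices : list nat := sort_by f (seq 0 n).

Definition sort_index (j : nat) : nat := nth j sorted_indices 0%nat.

(** [order_stat j] is the [j]-th smallest of [f 0, ..., f (n-1)], counted from [0]. *)
Definition order_stat (j : nat) : R := f (sort_index j).

Lemma sorted_indices_perm : Permutation sorted_indices (seq 0 n).
Proof. apply sort_by_perm. Qed.

Lemma sorted_indices_length : length sorted_indices = n.
Proof. rewrite (Permutation_length sorted_indices_perm); apply length_seq. Qed.

Lemma sort_index_lt j : (j < n)%nat -> (sort_index j < n)%nat.
Proof.
  intros Hj.
  assert (Hin : In (sort_index j) (seq 0 n)).
  { eapply Permutation_in; [apply sorted_indices_perm|].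
    apply nth_In; rewrite sorted_indices_length; auto. }
  apply in_seq in Hin; lia.
Qed.

Lemma sort_index_inj i j : (i < n)%nat -> (j < n)%nat -> sort_index i = sort_index j -> i = j.
Proof.
  intros Hi Hj; apply NoDup_nth; rewrite ?sorted_indices_length; auto.
  eapply Permutation_NoDup; [symmetry; apply sorted_indices_perm | apply seq_NoDup].
Qed.

Lemma order_stat_mono i j : (i <= j)%nat -> (j < n)%nat -> order_stat i <= order_stat j.
Proof.
  unfold order_stat, sort_index; rewrite <- sorted_indices_length.
  assert (Hs : StronglySorted (fun a b => f a <= f b) sorted_indices).
  { apply Sorted_StronglySorted; [intros a b c; lra | apply sort_by_sorted]. }
  revert i j; induction Hs as [|x l _ IH Hx]; simpl; intros i j Hij Hj; [lia|].
  rewrite Forall_forall in Hx.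
  destruct i, j; try lia; [lra | apply Hx, nth_In | apply IH]; lia.
Qed.

End OrderStatistics.

Lemma is_sorted_eigs_order_stat n M U f :
  orthonormal_columns n U -> eigenbasis n M U f -> is_sorted_eigs n M (order_stat n f).
Proof.
  intros HU HM; split.
  - intros j Hj; apply order_stat_mono; lia.
  - exists (fun k j => U k (sort_index n f j)); split.
    + intros i j Hi Hj; rewrite HU by (apply sort_index_lt; auto); unfold Imat.
      destruct (Nat.eqb_spec (sort_index n f i) (sort_index n f j)) as [E|E],
               (Nat.eqb_spec i j); subst; try congruence.
      apply sort_index_inj in E; auto; contradiction.
    + intros i j Hi Hj; apply HM, sort_index_lt; auto.
Qed.

(** * Counting values below a threshold *)

Fixpoint nsum (n : nat) (g : nat -> nat) : nat :=
  match n with O => O | S m => (nsum m g + g m)%nat end.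

Lemma nsum_ext n g h : (forall i, (i < n)%nat -> g i = h i) -> nsum n g = nsum n h.
Proof. induction n; simpl; intros H; auto. rewrite IHn, H; auto. Qed.

Lemma nsum_add n g h : nsum n (fun i => g i + h i)%nat = (nsum n g + nsum n h)%nat.
Proof. induction n; simpl; auto. rewrite IHn; lia. Qed.

Lemma nsum_const_1 n : nsum n (fun _ => 1%nat) = n.
Proof. induction n; simpl; lia. Qed.

Lemma nsum_app a b g : nsum (a + b) g = (nsum a g + nsum b (fun i => g (a + i)))%nat.
Proof. induction b; simpl; [rewrite Nat.add_0_r; lia|]. rewrite Nat.add_succ_r; simpl; lia. Qed.

Lemma nsum_prod p q g : nsum (p * q) g = nsum p (fun a => nsum q (fun b => g (a * q + b)%nat)).
Proof. induction p; simpl; auto. rewrite Nat.add_comm, nsum_app, IHp; reflexivity. Qed.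

Lemma nsum_rev n g : nsum n g = nsum n (fun i => g (n - 1 - i)%nat).
Proof.
  induction n; auto.
  change (nsum (S n) g) with (nsum n g + g n)%nat.
  replace (S n) with (1 + n)%nat by lia; rewrite nsum_app, IHn; simpl.
  rewrite Nat.add_comm; f_equal; [f_equal; lia | apply nsum_ext; intros; f_equal; lia].
Qed.

Lemma nsum_mono n g h : (forall i, (i < n)%nat -> (g i <= h i)%nat) -> (nsum n g <= nsum n h)%nat.
Proof.
  induction n; simpl; intros H; auto.
  assert (nsum n g <= nsum n h)%nat by (apply IHn; auto).
  specialize (H n); lia.
Qed.

Lemma nsum_odd n g : (forall i, (i < n)%nat -> Nat.Odd (g i)) -> Nat.odd (nsum n g) = Nat.odd n.
Proof.
  induction n; simpl; intros H; auto.
  rewrite Nat.odd_add, IHn, (proj2 (Nat.odd_spec _) (H n ltac:(lia))) by auto.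
  rewrite Nat.odd_succ, <- Nat.negb_odd; destruct (Nat.odd n); reflexivity.
Qed.

Lemma nsum_le_of_vanishing n N g : (forall i, (g i <= 1)%nat) ->
  (forall i, (N <= i < n)%nat -> g i = 0%nat) -> (nsum n g <= N)%nat.
Proof.
  induction n; simpl; intros H1 H0; [lia|].
  destruct (le_lt_dec N n).
  - rewrite H0 by lia; rewrite Nat.add_0_r; apply IHn; auto; intros; apply H0; lia.
  - assert (nsum n g <= n)%nat by (rewrite <- (nsum_const_1 n) at 2; apply nsum_mono; auto).
    specialize (H1 n); lia.
Qed.

Lemma nsum_ge_of_ones n N g : (N < n)%nat -> (forall i, (i <= N)%nat -> g i = 1%nat) ->
  (N < nsum n g)%nat.
Proof.
  intros HN H1; replace n with (S N + (n - S N))%nat by lia; rewrite nsum_app.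
  rewrite (nsum_ext (S N) g (fun _ => 1%nat)), nsum_const_1 by (intros; apply H1; lia). lia.
Qed.

Lemma nsum_list n g : nsum n g = list_sum (map g (seq 0 n)).
Proof. induction n; auto. rewrite seq_S, map_app, list_sum_app; simpl; lia. Qed.

Lemma map_nth_seq (l : list nat) : map (fun j => nth j l 0%nat) (seq 0 (length l)) = l.
Proof.
  induction l as [|x l IH]; auto; simpl; f_equal.
  rewrite <- seq_shift, map_map; exact IH.
Qed.

Lemma nsum_involution n s g : (forall i, (i < n)%nat -> (s i < n)%nat) ->
  (forall i, (i < n)%nat -> s (s i) = i) -> nsum n (fun i => g (s i)) = nsum n g.
Proof.
  intros Hlt Hinv; rewrite !nsum_list, <- map_map.
  apply Permutation_list_sum, Permutation_map, Permutation_map_same_l.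
  - apply FinFun.Injective_map_NoDup_in; [|apply seq_NoDup].
    intros x y Hx Hy E; apply in_seq in Hx, Hy.
    rewrite <- (Hinv x), <- (Hinv y), E by lia; reflexivity.
  - intros y Hy; apply in_map_iff in Hy as [x [<- Hx]]; apply in_seq in Hx.
    apply in_seq; specialize (Hlt x); lia.
Qed.

Definition ind_lt (x c : R) : nat := if Rlt_dec x c then 1%nat else 0%nat.

Definition count_lt (n : nat) (f : nat -> R) (c : R) : nat := nsum n (fun i => ind_lt (f i) c).

Lemma count_lt_le n f c : (count_lt n f c <= n)%nat.
Proof.
  rewrite <- (nsum_const_1 n) at 2; apply nsum_mono; intros i _.
  unfold ind_lt; destruct (Rlt_dec (f i) c); lia.
Qed.

Lemma count_lt_mono n f g c d : (forall i, (i < n)%nat -> f i < c -> g i < d) ->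
  (count_lt n f c <= count_lt n g d)%nat.
Proof.
  intros H; apply nsum_mono; intros i Hi.
  unfold ind_lt; destruct (Rlt_dec (f i) c), (Rlt_dec (g i) d); auto; exfalso; auto.
Qed.

Lemma count_lt_order_stat n f c :
  count_lt n f c = nsum n (fun j => ind_lt (order_stat n f j) c).
Proof.
  unfold count_lt, order_stat, sort_index; rewrite !nsum_list.
  rewrite <- (sorted_indices_length n f) at 2.
  rewrite <- (map_map (fun j => nth j (sorted_indices n f) 0%nat)
                      (fun i => ind_lt (f i) c)), map_nth_seq.
  apply Permutation_list_sum, Permutation_map; symmetry; apply sorted_indices_perm.
Qed.

Lemma order_stat_lt_iff n f c N : (N < n)%nat ->
  order_stat n f N < c <-> (N < count_lt n f c)%nat.
Proof.
  intros HN; rewrite count_lt_order_stat; split; intros H.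
  - apply nsum_ge_of_ones; auto; intros i Hi.
    unfold ind_lt; destruct (Rlt_dec (order_stat n f i) c) as [|Hc]; auto.
    exfalso; apply Hc, (Rle_lt_trans _ (order_stat n f N)); auto; apply order_stat_mono; lia.
  - destruct (Rlt_dec (order_stat n f N) c) as [|Hc]; auto; exfalso.
    enough (nsum n (fun j => ind_lt (order_stat n f j) c) <= N)%nat by lia.
    apply nsum_le_of_vanishing; intros i; unfold ind_lt;
      destruct (Rlt_dec (order_stat n f i) c) as [Hi|]; auto.
    intros Hi'; exfalso; apply Hc, (Rle_lt_trans _ (order_stat n f i)); auto.
    apply order_stat_mono; lia.
Qed.

(* If [order_stat g N] exceeded [order_stat f N + d], comparing counts below the midpoint
   would put more than [N] values of [g] below it. *)
Lemma order_stat_lipschitz n f g d N : (N < n)%nat ->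
  (forall i, (i < n)%nat -> Rabs (f i - g i) <= d) ->
  Rabs (order_stat n f N - order_stat n g N) <= d.
Proof.
  intros HN Hfg.
  assert (Hone : forall f g, (forall i, (i < n)%nat -> Rabs (f i - g i) <= d) ->
            order_stat n g N <= order_stat n f N + d).
  { clear f g Hfg; intros f g Hfg.
    destruct (Rle_dec (order_stat n g N) (order_stat n f N + d)) as [|Hgt]; auto; exfalso.
    set (c := (order_stat n f N + d + order_stat n g N) / 2).
    assert (Hf : (N < count_lt n f (c - d))%nat) by (apply order_stat_lt_iff; auto; unfold c; lra).
    assert (Hm : (count_lt n f (c - d) <= count_lt n g c)%nat).
    { apply count_lt_mono; intros i Hi Hlt; specialize (Hfg i Hi).
      rewrite Rabs_minus_sym in Hfg; pose proof (Rle_abs (g i - f i)); lra. }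
    assert (Hg : order_stat n g N < c) by (apply order_stat_lt_iff; auto; lia).
    unfold c in Hg; lra. }
  apply Rabs_le; split.
  - enough (order_stat n g N <= order_stat n f N + d) by lra.
    apply Hone; auto.
  - enough (order_stat n f N <= order_stat n g N + d) by lra.
    apply Hone; intros i Hi; rewrite Rabs_minus_sym; auto.
Qed.

(** * The spectrum at phi = 0 *)

Lemma Rabs_sin_le x : Rabs (sin x) <= Rabs x.
Proof.
  assert (Hpos : forall y, 0 <= y -> Rabs (sin y) <= y).
  { intros y Hy; apply Rabs_le; split.
    - destruct (Rle_dec y PI).
      + pose proof (sin_ge_0 y Hy r); lra.
      + pose proof (SIN_bound y); pose proof PI2_3_2; lra.
    - destruct (Req_dec y 0) as [->|]; [rewrite sin_0; lra|].
      pose proof (sin_lt_x y); lra. }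
  destruct (Rle_dec 0 x); [rewrite (Rabs_right x) by lra; auto|].
  rewrite (Rabs_left x), <- (Ropp_involutive x) at 1 by lra; rewrite sin_neg, Rabs_Ropp.
  apply Hpos; lra.
Qed.

Lemma cos_lipschitz a b : Rabs (cos a - cos b) <= Rabs (a - b).
Proof.
  rewrite form2, !Rabs_mult, (Rabs_left (-2)) by lra.
  pose proof (Rabs_sin_le ((a - b) / 2)) as Hs.
  unfold Rdiv in Hs; rewrite Rabs_mult, (Rabs_right (/ 2)) in Hs by lra.
  assert (Rabs (sin ((a + b) / 2)) <= 1) by (apply Rabs_le, SIN_bound).
  pose proof (Rabs_pos (sin ((a - b) / 2))); pose proof (Rabs_pos (sin ((a + b) / 2))).
  unfold Rdiv; nra.
Qed.

Lemma IVT_between (F : R -> R) a b y : a <= b -> continuity F ->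
  (F a <= y <= F b \/ F b <= y <= F a) -> exists z, a <= z <= b /\ F z = y.
Proof.
  intros Hab HF Hy.
  assert (Hc : continuity (fun x => F x - y)) 
    by (apply continuity_minus; [exact HF | apply continuity_const; intros ? ?; reflexivity]).
  destruct (IVT_cor (fun x => F x - y) a b Hc Hab) as [z [Hz Fz]]; [destruct Hy; nra|].
  exists z; split; auto; lra.
Qed.

(** The eigenvalues of [DeltaGamma p q th 0], indexed by [j = k * q + l]. *)
Definition grid_eigval (p q : nat) (th : R) (j : nat) : R :=
  cycle_eigval p th (j / q) + cycle_eigval q 0 (j mod q).

Lemma band_order_stat p q th j : (0 < p)%nat -> (0 < q)%nat -> 0 <= th <= PI ->
  band p q (S j) (order_stat (p * q) (grid_eigval p q th) j).
Proof.
  intros Hp Hq Hth; exists th, 0; split; [auto | split; [pose proof PI_RGT_0; lra|]].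
  exists (order_stat (p * q) (grid_eigval p q th)); split; [|f_equal; lia].
  apply is_sorted_eigs_order_stat with (U := kron q (cycle_basis p th) (cycle_basis q 0)).
  - apply orthonormal_columns_kron; auto using cycle_basis_orthonormal.
  - apply eigenbasis_kron_sum; auto using cycle_basis_eigen.
Qed.

Lemma grid_eigval_lipschitz p q th th' j : (0 < p)%nat ->
  Rabs (grid_eigval p q th j - grid_eigval p q th' j) <= 2 * Rabs (th - th').
Proof.
  intros Hp; unfold grid_eigval, cycle_eigval, cycle_angle.
  assert (Hp1 : 1 <= INR p) by (apply (le_INR 1); lia).
  set (c := 2 * PI * INR (j / q)).
  replace (_ - _) with (2 * (cos ((th + c) / INR p) - cos ((th' + c) / INR p))) by ring.
  rewrite Rabs_mult, (Rabs_right 2) by lra; apply Rmult_le_compat_l; [lra|].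
  eapply Rle_trans; [apply cos_lipschitz|].
  replace ((th + c) / INR p - (th' + c) / INR p) with ((th - th') * / INR p) by (field; lra).
  rewrite Rabs_mult, (Rabs_right (/ INR p)) by (apply Rle_ge, Rlt_le, Rinv_0_lt_compat; lra).
  assert (/ INR p <= 1) by (rewrite <- Rinv_1; apply Rinv_le_contravar; lra).
  pose proof (Rabs_pos (th - th')); nra.
Qed.

Lemma order_stat_grid_continuous p q j : (0 < p)%nat -> (j < p * q)%nat ->
  continuity (fun th => order_stat (p * q) (grid_eigval p q th) j).
Proof.
  intros Hp Hj x eps Heps; exists (eps / 2); split; [lra|].
  intros y [_ Hy]; simpl in *; unfold R_dist in *.
  eapply Rle_lt_trans; [apply order_stat_lipschitz; auto|].
  - intros i _; apply grid_eigval_lipschitz; auto.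
  - lra.
Qed.

Lemma cos_odd_fraction_neq0 (u d : Z) : Z.Odd u -> cos (PI * IZR u / (4 * IZR d)) <> 0.
Proof.
  intros [v ->] H.
  destruct (Z.eq_dec d 0) as [->|Hd0]; [rewrite Rmult_0_r, Rdiv_0_r, cos_0 in H; lra|].
  apply not_0_IZR in Hd0 as Hd; apply cos_eq_0_0 in H as [k Hk].
  assert (HZ : IZR (2 * v + 1) = IZR (2 * (d * (2 * k + 1)))).
  { pose proof PI_RGT_0.
    apply (Rmult_eq_reg_l (PI / (4 * IZR d)));
      [|apply Rmult_integral_contrapositive; split; [lra | apply Rinv_neq_0_compat; lra]].
    replace (PI / (4 * IZR d) * IZR (2 * v + 1)) with (PI * IZR (2 * v + 1) / (4 * IZR d))
      by (field; auto).
    rewrite Hk, (mult_IZR 2), (mult_IZR d), plus_IZR, mult_IZR; field; auto. }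
  apply eq_IZR in HZ; lia.
Qed.

Lemma cycle_eigval_bound r th k : -2 <= cycle_eigval r th k <= 2.
Proof. unfold cycle_eigval; pose proof (COS_bound (cycle_angle r th k)); lra. Qed.

Lemma cycle_eigval_0_first r : (0 < r)%nat -> cycle_eigval r 0 0 = 2.
Proof.
  intros; unfold cycle_eigval, cycle_angle.
  rewrite INR_0, Rmult_0_r, Rplus_0_r, Rdiv_0_l, cos_0; ring.
Qed.

Lemma cycle_eigval_0_middle h : (0 < h)%nat -> cycle_eigval (2 * h) 0 h = -2.
Proof.
  intros; unfold cycle_eigval, cycle_angle; rewrite mult_INR.
  replace ((0 + 2 * PI * INR h) / (INR 2 * INR h)) with PI
    by (simpl; field; apply not_0_INR; lia).
  rewrite cos_PI; ring.
Qed.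

Lemma cycle_eigval_0_reflect r l : (0 < r)%nat -> (l <= r)%nat ->
  cycle_eigval r 0 (r - l) = cycle_eigval r 0 l.
Proof.
  intros Hr Hl; unfold cycle_eigval, cycle_angle; rewrite minus_INR by auto.
  replace ((0 + 2 * PI * (INR r - INR l)) / INR r)
    with (- ((0 + 2 * PI * INR l) / INR r) + 2 * INR 1 * PI)
    by (simpl; field; apply not_0_INR; lia).
  rewrite cos_period, cos_neg; reflexivity.
Qed.

Lemma count_lt_grid p q th c :
  count_lt (p * q) (grid_eigval p q th) c =
  nsum p (fun k => nsum q (fun l =>
    ind_lt (cycle_eigval p th k + cycle_eigval q 0 l) c)).
Proof.
  unfold count_lt; rewrite nsum_prod; apply nsum_ext; intros k _; apply nsum_ext; intros l Hl.
  unfold grid_eigval; rewrite div_mul_add, mod_mul_add; auto.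
Qed.

(* The terms [l = 0] and [l = h] contribute [0] and [1]; the others pair up as [l, 2h - l]. *)
Lemma count_neg_cycle_odd h A : (0 < h)%nat -> -2 <= A <= 2 ->
  (forall l, (l < 2 * h)%nat -> A + cycle_eigval (2 * h) 0 l <> 0) ->
  Nat.Odd (nsum (2 * h) (fun l => ind_lt (A + cycle_eigval (2 * h) 0 l) 0)).
Proof.
  intros Hh HA Hnz.
  set (g := fun l => ind_lt (A + cycle_eigval (2 * h) 0 l) 0).
  assert (Hg0 : g 0%nat = 0%nat).
  { unfold g, ind_lt; rewrite cycle_eigval_0_first by lia; destruct Rlt_dec; auto; lra. }
  assert (Hgh : g h = 1%nat).
  { unfold g, ind_lt; specialize (Hnz h ltac:(lia)); rewrite cycle_eigval_0_middle in * by auto.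
    destruct Rlt_dec; auto; lra. }
  assert (Hpair : nsum (h - 1) (fun i => g (h + 1 + i)%nat) =
                  nsum (h - 1) (fun i => g (1 + i)%nat)).
  { rewrite nsum_rev; apply nsum_ext; intros i Hi; unfold g.
    replace (h + 1 + (h - 1 - 1 - i))%nat with (2 * h - (1 + i))%nat by lia.
    rewrite cycle_eigval_0_reflect by lia; reflexivity. }
  replace (2 * h)%nat with (1 + (h - 1) + 1 + (h - 1))%nat at 1 by lia.
  rewrite !nsum_app; cbn [nsum].
  replace (1 + (h - 1) + 0)%nat with h by lia.
  replace (1 + (h - 1) + 1)%nat with (h + 1)%nat by lia.
  rewrite Hg0, Hgh, Hpair.
  exists (nsum (h - 1) (fun i => g (1 + i)%nat)); lia.
Qed.

Definition grid_nonzero (p q : nat) (th : R) : Prop :=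
  forall k l, (k < p)%nat -> (l < q)%nat -> cycle_eigval p th k + cycle_eigval q 0 l <> 0.

(* [cos x + cos z = 2 cos ((x - z) / 2) cos ((x + z) / 2)], and both half-angles are odd
   multiples of [PI / (8 m p)]. *)
Lemma grid_nonzero_odd_angle p m o : (0 < p)%nat -> (0 < m)%nat -> Nat.Odd o ->
  grid_nonzero p (2 * (2 * m)) (PI * INR o / (4 * INR m)).
Proof.
  intros Hp Hm [v ->] k l _ _ H.
  assert (HpR : 0 < INR p) by (apply lt_0_INR; lia).
  assert (HmR : 0 < INR m) by (apply lt_0_INR; lia).
  unfold cycle_eigval, cycle_angle in H; rewrite !mult_INR in H.
  set (x := (PI * INR (2 * v + 1) / (4 * INR m) + 2 * PI * INR k) / INR p) in H.
  set (z := (0 + 2 * PI * INR l) / (INR 2 * (INR 2 * INR m))) in H.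
  assert (Hxz : cos ((x - z) / 2) * cos ((x + z) / 2) = 0)
    by (assert (Hs : cos x + cos z = 0) by lra; rewrite form1 in Hs; lra).
  set (P := Z.of_nat p); set (M := Z.of_nat m); set (K := Z.of_nat k); set (L := Z.of_nat l).
  apply Rmult_integral in Hxz as [Hc|Hc]; revert Hc.
  - replace ((x - z) / 2) with
      (PI * IZR (2 * Z.of_nat v + 1 + 8 * M * K - 2 * P * L) / (4 * IZR (2 * M * P))).
    + apply cos_odd_fraction_neq0; exists (Z.of_nat v + 4 * M * K - P * L)%Z; ring.
    + unfold x, z, P, M, K, L.
      rewrite ?minus_IZR, ?plus_IZR, ?mult_IZR, <- ?INR_IZR_INZ, ?plus_INR, ?mult_INR.
      cbn [INR]; field; split; lra.
  - replace ((x + z) / 2) with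
      (PI * IZR (2 * Z.of_nat v + 1 + 8 * M * K + 2 * P * L) / (4 * IZR (2 * M * P))).
    + apply cos_odd_fraction_neq0; exists (Z.of_nat v + 4 * M * K + P * L)%Z; ring.
    + unfold x, z, P, M, K, L.
      rewrite ?minus_IZR, ?plus_IZR, ?mult_IZR, <- ?INR_IZR_INZ, ?plus_INR, ?mult_INR.
      cbn [INR]; field; split; lra.
Qed.

Lemma grid_eigval_neq0 p q th j : (0 < q)%nat -> (j < p * q)%nat -> grid_nonzero p q th ->
  grid_eigval p q th j <> 0.
Proof.
  intros Hq Hj Hnz; apply Hnz; [apply Nat.Div0.div_lt_upper_bound | apply Nat.mod_upper_bound]; lia.
Qed.

Lemma count_neg_grid_odd p h th : Nat.Odd p -> (0 < h)%nat -> grid_nonzero p (2 * h) th ->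
  Nat.Odd (count_lt (p * (2 * h)) (grid_eigval p (2 * h) th) 0).
Proof.
  intros Hp Hh Hnz; rewrite count_lt_grid; apply Nat.odd_spec; rewrite nsum_odd.
  - apply Nat.odd_spec, Hp.
  - intros k Hk; apply count_neg_cycle_odd; auto using cycle_eigval_bound.
Qed.

(** [k |-> n0 - k (mod 2 n0 + 1)] and [l |-> l + h (mod 2 h)]. *)
Definition odd_reflect (n0 k : nat) : nat :=
  if Nat.leb k n0 then (n0 - k)%nat else (3 * n0 + 1 - k)%nat.
Definition antipode (h l : nat) : nat := if Nat.ltb l h then (l + h)%nat else (l - h)%nat.

Lemma odd_reflect_involutive n0 k : (k < 2 * n0 + 1)%nat ->
  (odd_reflect n0 k < 2 * n0 + 1)%nat /\ odd_reflect n0 (odd_reflect n0 k) = k.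
Proof.
  unfold odd_reflect; intros; destruct (Nat.leb_spec k n0);
    [destruct (Nat.leb_spec (n0 - k) n0) | destruct (Nat.leb_spec (3 * n0 + 1 - k) n0)]; lia.
Qed.

Lemma antipode_involutive h l : (l < 2 * h)%nat ->
  (antipode h l < 2 * h)%nat /\ antipode h (antipode h l) = l.
Proof.
  unfold antipode; intros; destruct (Nat.ltb_spec l h);
    [destruct (Nat.ltb_spec (l + h) h) | destruct (Nat.ltb_spec (l - h) h)]; lia.
Qed.

Lemma cycle_eigval_odd_reflect n0 th k : (k < 2 * n0 + 1)%nat ->
  cycle_eigval (2 * n0 + 1) (PI - th) (odd_reflect n0 k) = - cycle_eigval (2 * n0 + 1) th k.
Proof.
  intros Hk; unfold cycle_eigval, cycle_angle, odd_reflect.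
  assert (Hp : INR (2 * n0 + 1) = 2 * INR n0 + 1) by (rewrite plus_INR, mult_INR; simpl; ring).
  assert (HpR : 0 < 2 * INR n0 + 1) by (pose proof (pos_INR n0); lra).
  rewrite Hp; destruct (Nat.leb_spec k n0).
  - rewrite minus_INR by auto.
    replace ((PI - th + 2 * PI * (INR n0 - INR k)) / (2 * INR n0 + 1))
      with (PI - (th + 2 * PI * INR k) / (2 * INR n0 + 1)) by (field; lra).
    rewrite cos_minus, cos_PI, sin_PI; ring.
  - rewrite minus_INR, plus_INR, mult_INR by lia.
    replace ((PI - th + 2 * PI * (INR 3 * INR n0 + INR 1 - INR k)) / (2 * INR n0 + 1))
      with (PI - (th + 2 * PI * INR k) / (2 * INR n0 + 1) + 2 * INR 1 * PI) by (simpl; field; lra).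
    rewrite cos_period, cos_minus, cos_PI, sin_PI; ring.
Qed.

Lemma cycle_eigval_antipode h th l : (0 < h)%nat -> (l < 2 * h)%nat ->
  cycle_eigval (2 * h) th (antipode h l) = - cycle_eigval (2 * h) th l.
Proof.
  intros Hh Hl; unfold cycle_eigval, cycle_angle, antipode.
  assert (HhR : 0 < INR h) by (apply lt_0_INR; lia).
  rewrite mult_INR; destruct (Nat.ltb_spec l h).
  - rewrite plus_INR.
    replace ((th + 2 * PI * (INR l + INR h)) / (INR 2 * INR h))
      with ((th + 2 * PI * INR l) / (INR 2 * INR h) + PI) by (simpl; field; lra).
    rewrite neg_cos; ring.
  - rewrite minus_INR by lia.
    replace ((th + 2 * PI * (INR l - INR h)) / (INR 2 * INR h))
      with ((th + 2 * PI * INR l) / (INR 2 * INR h) - PI) by (simpl; field; lra).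
    rewrite cos_minus, cos_PI, sin_PI; ring.
Qed.

Lemma count_neg_grid_reflect n0 h th : (0 < h)%nat -> grid_nonzero (2 * n0 + 1) (2 * h) th ->
  (count_lt ((2 * n0 + 1) * (2 * h)) (grid_eigval (2 * n0 + 1) (2 * h) (PI - th)) 0 +
   count_lt ((2 * n0 + 1) * (2 * h)) (grid_eigval (2 * n0 + 1) (2 * h) th) 0 =
   (2 * n0 + 1) * (2 * h))%nat.
Proof.
  intros Hh Hnz; rewrite !count_lt_grid.
  erewrite <- (nsum_involution _ (odd_reflect n0)) by (intros; apply odd_reflect_involutive; auto).
  rewrite <- nsum_add, <- (nsum_const_1 ((2 * n0 + 1) * (2 * h))), nsum_prod.
  apply nsum_ext; intros k Hk.
  erewrite <- (nsum_involution _ (antipode h)) by (intros; apply antipode_involutive; auto).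
  rewrite <- nsum_add; apply nsum_ext; intros l Hl.
  rewrite cycle_eigval_odd_reflect, cycle_eigval_antipode by auto.
  specialize (Hnz k l Hk Hl).
  unfold ind_lt; destruct (Rlt_dec _ 0), (Rlt_dec _ 0); lra || lia.
Qed.

Lemma sign_change_of_counts n f g : (forall j, (j < n)%nat -> g j <> 0) ->
  (count_lt n g 0 < count_lt n f 0)%nat ->
  exists j, (j < n)%nat /\ order_stat n f j < 0 < order_stat n g j.
Proof.
  intros Hg Hcount; pose proof (count_lt_le n f 0).
  exists (count_lt n f 0 - 1)%nat; repeat split; [lia | apply order_stat_lt_iff; lia|].
  destruct (Rlt_dec (order_stat n g (count_lt n f 0 - 1)) 0) as [Hlt|Hge].
  - apply order_stat_lt_iff in Hlt; lia.
  - assert (order_stat n g (count_lt n f 0 - 1) <> 0) by (apply Hg, sort_index_lt; lia). lra.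
Qed.

Lemma band_interior_of_sign_change p q j th1 th2 : (0 < p)%nat -> (0 < q)%nat -> (j < p * q)%nat ->
  0 <= th1 <= PI -> 0 <= th2 <= PI ->
  order_stat (p * q) (grid_eigval p q th1) j < 0 < order_stat (p * q) (grid_eigval p q th2) j ->
  in_interior (band p q (S j)) 0.
Proof.
  intros Hp Hq Hj Hth1 Hth2 [Hneg Hpos].
  pose (F := fun th => order_stat (p * q) (grid_eigval p q th) j).
  change (F th1 < 0) in Hneg; change (0 < F th2) in Hpos.
  assert (HF : continuity F) by (apply order_stat_grid_continuous; auto).
  exists (Rmin (- F th1) (F th2)); split; [apply Rmin_pos; lra|].
  intros y Hy; rewrite Rminus_0_r in Hy; apply Rabs_def2 in Hy.
  pose proof (Rmin_l (- F th1) (F th2)); pose proof (Rmin_r (- F th1) (F th2)).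
  destruct (Rle_dec th1 th2).
  - destruct (IVT_between F th1 th2 y) as [z [Hz <-]]; auto; [lra|].
    apply band_order_stat; auto; lra.
  - destruct (IVT_between F th2 th1 y) as [z [Hz <-]]; auto; [lra|lra|].
    apply band_order_stat; auto; lra.
Qed.

Lemma band_interior_of_count_lt p q th1 th2 : (0 < p)%nat -> (0 < q)%nat ->
  0 <= th1 <= PI -> 0 <= th2 <= PI -> grid_nonzero p q th2 ->
  (count_lt (p * q) (grid_eigval p q th2) 0 < count_lt (p * q) (grid_eigval p q th1) 0)%nat ->
  exists j, (1 <= j <= p * q)%nat /\ in_interior (band p q j) 0.
Proof.
  intros Hp Hq Hth1 Hth2 Hnz Hlt.
  destruct (sign_change_of_counts (p * q) (grid_eigval p q th1) (grid_eigval p q th2))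
    as [j [Hj Hsign]]; auto using grid_eigval_neq0.
  exists (S j); split; [lia|]; apply (band_interior_of_sign_change _ _ j th1 th2); auto.
Qed.

Lemma odd_angle_bounds m o : (0 < m)%nat -> (o <= 4 * m)%nat ->
  0 <= PI * INR o / (4 * INR m) <= PI.
Proof.
  intros Hm Ho; apply le_INR in Ho; rewrite mult_INR in Ho; simpl in Ho.
  assert (HmR : 0 < INR m) by (apply lt_0_INR; lia).
  pose proof (pos_INR o); pose proof PI_RGT_0.
  split; [apply Rmult_le_pos; [nra | apply Rlt_le, Rinv_0_lt_compat; lra]|].
  apply Rmult_le_reg_r with (4 * INR m); [lra|].
  unfold Rdiv; rewrite Rmult_assoc, Rinv_l; nra.
Qed.

Lemma odd_angle_reflect m : (0 < m)%nat ->
  PI - PI * INR (2 * m + 1) / (4 * INR m) = PI * INR (2 * m - 1) / (4 * INR m).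
Proof.
  intros Hm; assert (0 < INR m) by (apply lt_0_INR; lia).
  rewrite minus_INR, plus_INR, mult_INR by lia; simpl; field; lra.
Qed.

Theorem proposition3p4 (p q : nat) :
  Nat.Odd p -> (0 < q)%nat -> Nat.divide 4 q ->
  exists j : nat, (1 <= j <= p * q)%nat /\ in_interior (band p q j) 0.
Proof.
  intros [n0 ->] Hq [m ->].
  assert (Hm : (0 < m)%nat) by lia.
  replace (m * 4)%nat with (2 * (2 * m))%nat by lia.
  set (th := PI * INR (2 * m + 1) / (4 * INR m)).
  pose proof (odd_angle_reflect m Hm) as Hrefl; fold th in Hrefl.
  assert (Hth : 0 <= th <= PI) by (apply odd_angle_bounds; lia).
  assert (Hth' : 0 <= PI - th <= PI) by (rewrite Hrefl; apply odd_angle_bounds; lia).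
  assert (Hnz : grid_nonzero (2 * n0 + 1) (2 * (2 * m)) th)
    by (apply grid_nonzero_odd_angle; [lia | lia | exists m; lia]).
  assert (Hnz' : grid_nonzero (2 * n0 + 1) (2 * (2 * m)) (PI - th))
    by (rewrite Hrefl; apply grid_nonzero_odd_angle; [lia | lia | exists (m - 1)%nat; lia]).
  (* The two counts are odd and add up to [4 m p], so they differ. *)
  destruct (count_neg_grid_odd (2 * n0 + 1) (2 * m) th) as [a Ha];
    [exists n0; lia | lia | exact Hnz |].
  pose proof (count_neg_grid_reflect n0 (2 * m) th ltac:(lia) Hnz) as Hsum.
  set (N := ((2 * n0 + 1) * (2 * (2 * m)))%nat) in *.
  destruct (Nat.lt_total (count_lt N (grid_eigval (2 * n0 + 1) (2 * (2 * m)) th) 0)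
                         (count_lt N (grid_eigval (2 * n0 + 1) (2 * (2 * m)) (PI - th)) 0))
    as [Hlt|[E|Hlt]].
  - apply (band_interior_of_count_lt _ _ (PI - th) th); auto; lia.
  - rewrite <- E, Ha in Hsum; lia.
  - apply (band_interior_of_count_lt _ _ th (PI - th)); auto; lia.
Qed.
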